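(* Let $p,q\ge0$ be integers and $\alpha=(\alpha_1,\dots,\alpha_p)$, $\beta=(\beta_1,\dots,\beta_q)$ with all $\alpha_i>0,\beta_j>0$. Let ${}_p\rho_q(n)=n!\,\frac{(\beta_1)_n\cdots(\beta_q)_n}{(\alpha_1)_n\cdots(\alpha_p)_n}$, ${}_pF_q(\alpha,\beta;x)=\sum_{n\ge0}\frac{x^n}{{}_p\rho_q(n)}$, and for $w$ with $|w|^2$ strictly inside the disc of convergence let $|w;\alpha,\beta\rangle={}_pF_q(\alpha,\beta;|w|^2)^{-1/2}\sum_{n\ge0}\frac{w^n}{\sqrt{{}_p\rho_q(n)}}|n\rangle$ in the Hilbert space with orthonormal basis $\{|n\rangle\}_{n\ge0}$, where $\hat n|n\rangle=n|n\rangle$. Let $\Omega>0$, $\tau=2\pi/\Omega$, $k\ge1$ an integer, and $z$ with $|z|^2$ strictly inside the disc of convergence. Then $$e^{-i\Omega(\tau/k)\hat n^2}|z;\alpha,\beta\rangle=\frac1k\sum_{j=0}^{k-1}\sum_{l=0}^{k-1}e^{-2\pi i j(j+l)/k}\,|ze^{2\pi i l/k};\alpha,\beta\rangle .$$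
   Context: $(a)_n=a(a+1)\cdots(a+n-1)$, $(a)_0=1$, is the Pochhammer symbol. The series ${}_pF_q$ converges for all $x$ if $p\le q$ and for $|x|<1$ if $p=q+1$. The operator $e^{-i\Omega t\hat n^2}$ acts by $|n\rangle\mapsto e^{-i\Omega t n^2}|n\rangle$. *)

From HB Require Import structures.
From mathcomp Require Import all_boot all_order all_algebra.
From mathcomp Require Import all_classical all_reals all_analysis.
From mathcomp Require Import complex.
Set Implicit Arguments. Unset Strict Implicit. Unset Printing Implicit Defensive.
Import Order.TTheory GRing.Theory Num.Theory numFieldNormedType.Exports.
Local Open Scope ring_scope.
Local Open Scope complex_scope.

Section Defs.
Variable R : realType.

Definition pochhammer (a : R) (n : nat) : R := \prod_(i < n) (a + i%:R).

Definition prho (p q : nat) (al : 'I_p -> R) (be : 'I_q -> R) (n : nat) : R :=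
  (n`!)%:R * (\prod_(j < q) pochhammer (be j) n) / (\prod_(i < p) pochhammer (al i) n).

Definition pFq (p q : nat) (al : 'I_p -> R) (be : 'I_q -> R) (x : R) : R :=
  limn (series (fun n => x ^+ n / prho al be n)).

Definition in_conv_disc (p q : nat) (al : 'I_p -> R) (be : 'I_q -> R) (x : R) : Prop :=
  exists r : R, `|x| < r /\ cvgn (series (fun n => r ^+ n / prho al be n)).

Definition sqmod (w : R[i]) : R := let: a +i* b := w in a ^+ 2 + b ^+ 2.

Definition expi (t : R) : R[i] := cos t +i* sin t.

(* Vectors of the Hilbert space with orthonormal basis {|n>}_{n≥0} are
   represented by their coefficient sequences (v n = <n|v>). *)

Definition coh (p q : nat) (al : 'I_p -> R) (be : 'I_q -> R) (w : R[i]) : nat -> R[i] :=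
  fun n => ((Num.sqrt (pFq al be (sqmod w)))^-1)%:C * w ^+ n
           * ((Num.sqrt (prho al be n))^-1)%:C.

Definition evolve (Om t : R) (v : nat -> R[i]) : nat -> R[i] :=
  fun n => expi (- (Om * t * (n%:R ^+ 2))) * v n.

End Defs.

From HB Require Import structures.
From mathcomp Require Import all_boot all_order all_algebra.
From mathcomp Require Import all_classical all_reals all_analysis.
From mathcomp Require Import complex ring lra.
Import Order.TTheory GRing.Theory Num.Theory numFieldNormedType.Exports.
Local Open Scope ring_scope.
Local Open Scope complex_scope.

(* Let w = e^{2 pi i / k}, a primitive k-th root of unity.  The normalisation
   of |z;al,be> only depends on |z|, so rotating z by w^l multiplies its n-th
   coefficient by w^{ln}, while the evolution over tau/k multiplies it by
   w^{-n^2}.  The n-th coefficient of the right-hand side is thus that of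
   |z;al,be> times (1/k) sum_j w^{-j^2} sum_l (w^{n-j})^l, and orthogonality
   of the characters of Z/k keeps only j = n mod k, leaving w^{-n^2}. *)

Lemma sum_expr_unity_root (F : idomainType) (k : nat) (x : F) :
  x ^+ k = 1 -> \sum_(l < k) x ^+ l = if x == 1 then k%:R else 0.
Proof.
move=> xk1; have [-> | x_neq1] := eqVneq x 1.
  by under eq_bigr do rewrite expr1n; rewrite sumr_const card_ord.
have := subrX1 x k; rewrite xk1 subrr => /esym/eqP.
by rewrite mulf_eq0 subr_eq0 (negbTE x_neq1) => /eqP.
Qed.

Lemma prim_root_quadratic_sum (F : fieldType) (k n : nat) (w : F) :
  k.-primitive_root w ->
  \sum_(j < k) \sum_(l < k) w ^- (j * (j + l)) * w ^+ (l * n)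
    = k%:R * w ^- (n * n).
Proof.
move=> prim_w; have k_gt0 := prim_order_gt0 prim_w.
have w_neq0 : w != 0 by rewrite (prim_root_eq0 prim_w) -lt0n.
have inner (j : nat) : \sum_(l < k) w ^- (j * (j + l)) * w ^+ (l * n)
    = if n == j %[mod k] then k%:R * w ^- (j * j) else 0.
  have -> : \sum_(l < k) w ^- (j * (j + l)) * w ^+ (l * n)
      = w ^- (j * j) * \sum_(l < k) (w ^+ n / w ^+ j) ^+ l.
    rewrite mulr_sumr; apply: eq_bigr => l _.
    rewrite mulnDr exprD invfM -mulrA exprMn exprVn -!exprM; congr (_ * _).
    by rewrite mulrC [(n * l)%N]mulnC.
  have root1 : (w ^+ n / w ^+ j) ^+ k = 1.
    rewrite exprMn exprVn (exprAC w n) (exprAC w j) (prim_expr_order prim_w).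
    by rewrite !expr1n invr1 mulr1.
  have eq1 : (w ^+ n / w ^+ j == 1) = (n == j %[mod k]).
    rewrite -(eq_prim_root_expr prim_w); apply/eqP/eqP => [/divr1_eq // | ->].
    by rewrite divff // expf_neq0.
  by rewrite sum_expr_unity_root // eq1; case: ifP; rewrite ?mulr0 // mulrC.
under eq_bigr do rewrite inner.
rewrite -big_mkcond (big_pred1 (Ordinal (ltn_pmod n k_gt0))) /=; last first.
  by move=> j; rewrite /= -val_eqE /= (modn_small (ltn_ord j)) eq_sym.
by rewrite -[w ^+ (n * n)](prim_expr_mod prim_w) -modnMm prim_expr_mod.
Qed.

Section ComplexExponential.
Variable R : realType.

Lemma expiD (a b : R) : expi a * expi b = expi (a + b).
Proof. by rewrite /expi cosD sinD /=; congr (_ +i* _); ring. Qed.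

Lemma expi0 : expi (0 : R) = 1.
Proof. by rewrite /expi cos0 sin0. Qed.

Lemma expiN (a : R) : expi (- a) = (expi a)^-1.
Proof. by apply/esym/mulr1_eq; rewrite expiD subrr expi0. Qed.

Lemma expiMn (a : R) (m : nat) : expi (m%:R * a) = expi a ^+ m.
Proof.
elim: m => [|m IH]; first by rewrite mul0r expi0.
by rewrite exprS -IH expiD -natr1 mulrDl mul1r addrC.
Qed.

Lemma expi2pi : expi (2 * pi : R) = 1.
Proof. by rewrite /expi mulr_natl cos2pi sin2pi. Qed.

Lemma expi_neq1 (x : R) : 0 < x < 2 * pi -> expi x != 1.
Proof.
move=> /andP[x_gt0 x_lt2pi]; apply/eqP => /(congr1 (@complex.Re R)) /= cos_x.
have sin_gt0 : 0 < sin (x / 2) by apply: sin_gt0_pi; apply/andP; split; lra.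
have := cos_mulr2n (x / 2); rewrite mulr2n -splitr cos_x mulr2n.
by have := sin2cos2 (x / 2); nra.
Qed.

Lemma prim_root_expi (k : nat) : (0 < k)%N ->
  k.-primitive_root (expi (2 * pi / k%:R : R)).
Proof.
move=> k_gt0; have k_pos : (0 : R) < k%:R by rewrite ltr0n.
apply/andP; split => //; apply/forallP => i; rewrite unity_rootE -expiMn.
have [-> | i_neq_k] := eqVneq i.+1 k.
  by rewrite mulrC (divfK (lt0r_neq0 k_pos)) expi2pi !eqxx.
rewrite eqbF_neg; apply: expi_neq1.
have i_lt_k : (i.+1%:R : R) < k%:R by rewrite ltr_nat ltn_neqAle i_neq_k ltn_ord.
have two_pi_pos : (0 : R) < 2 * pi by rewrite mulr_gt0 ?pi_gt0.
by rewrite mulr_gt0 ?divr_gt0 ?ltr0n //= mulrA ltr_pdivrMr // mulrC ltr_pM2l.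
Qed.

Lemma sqmod_mul_expi (z : R[i]) (t : R) : sqmod (z * expi t) = sqmod z.
Proof.
case: z => a b; rewrite /expi /sqmod /=.
by rewrite -[RHS]mulr1 -(cos2Dsin2 t); ring.
Qed.

Lemma coh_mul_expi (p q : nat) (al : 'I_p -> R) (be : 'I_q -> R)
    (z : R[i]) (t : R) (n : nat) :
  coh al be (z * expi t) n = expi t ^+ n * coh al be z n.
Proof. by rewrite /coh sqmod_mul_expi exprMn; ring. Qed.

End ComplexExponential.

Theorem mainTheorem4 (R : realType) (p q : nat) (al : 'I_p -> R) (be : 'I_q -> R)
  (hal : forall i, 0 < al i) (hbe : forall j, 0 < be j)
  (Om : R) (hOm : 0 < Om) (k : nat) (hk : (1 <= k)%N)
  (z : R[i]) (hz : in_conv_disc al be (sqmod z)) :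
  let tau := 2 * pi / Om in
  evolve Om (tau / k%:R) (coh al be z) =
  (fun n => (k%:R^-1)%:C *
     \sum_(j < k) \sum_(l < k)
        expi (- (2 * pi * j%:R * (j%:R + l%:R) / k%:R))
        * coh al be (z * expi (2 * pi * l%:R / k%:R)) n).
Proof.
(* The identity holds coefficientwise whatever the values of pFq and of the
   square roots. *)
move=> tau; apply: funext => n; set w := expi (2 * pi / k%:R : R).
have prim_w : k.-primitive_root w by exact: prim_root_expi.
have k_neq0 : k%:R != 0 :> R by rewrite pnatr_eq0 -lt0n.
have evolve_phase : expi (- (Om * (tau / k%:R) * n%:R ^+ 2)) = w ^- (n * n).
  rewrite -expiMn -expiN natrM; congr expi; rewrite /tau; field.
  by rewrite k_neq0 gt_eqF.
have phase (j l : nat) :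
    expi (- (2 * pi * j%:R * (j%:R + l%:R) / k%:R)) = w ^- (j * (j + l)).
  by rewrite -expiMn -expiN natrM natrD; congr expi; ring.
have rotation (l : nat) : expi (2 * pi * l%:R / k%:R) = w ^+ l.
  by rewrite -expiMn; congr expi; ring.
under eq_bigr do under eq_bigr do rewrite phase coh_mul_expi rotation -exprM mulrA.
under eq_bigr do rewrite -mulr_suml.
rewrite -mulr_suml prim_root_quadratic_sum // /evolve evolve_phase.
have k_inv : (k%:R^-1 : R)%:C * k%:R = 1.
  by rewrite -(rmorph_nat (@real_complex R)) -rmorphM mulVf // rmorph1.
by rewrite !mulrA k_inv mul1r.
Qed.
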